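(* The projective Fraïssé limit $\mathbb G$ of the class $\mathcal G$ of finite connected graphs with confluent epimorphisms is an indecomposable topological graph.
   Context: A graph is a pair $A=(V(A),E(A))$ with $E(A)\subseteq V(A)^2$ reflexive and symmetric; a topological graph additionally has $V$ compact, second countable, zero-dimensional and $E$ closed. Epimorphisms are (continuous) edge-preserving maps surjective on vertices and edges. A vertex set $S$ is disconnected if it splits into two nonempty closed subsets with no edges between them; otherwise connected; components are maximal connected subsets. An epimorphism $f\colon A\to B$ is confluent if for every connected $Q\subseteq V(B)$ each component $C$ of $f^{-1}(Q)$ has $f(C)=Q$. $\mathbb G$ is the unique topological graph such that (1) every finite connected graph is a confluent epimorphic image of $\mathbb G$; (2) for finite connected graphs $A,B$ and confluent epimorphisms $f\colon\mathbb G\to A$, $g\colon B\to A$ there is a confluent epimorphism $h\colon\mathbb G\to B$ with $f=g\circ h$; (3) for each $\varepsilon>0$ some confluent epimorphism from $\mathbb G$ onto a finite connected graph has all point-preimages of diameter $<\varepsilon$. A connected topological graph $G$ is indecomposable if there are no closed connected subgraphs $A,B$ with $V(G)=V(A)\cup V(B)$, $V(A)\neq V(G)$ and $V(B)\neq V(G)$. *)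

From HB Require Import structures.
From mathcomp Require Import all_boot all_order all_algebra.
From mathcomp Require Import all_classical all_reals all_analysis.
Set Implicit Arguments. Unset Strict Implicit. Unset Printing Implicit Defensive.
Import Order.TTheory GRing.Theory Num.Theory.
Local Open Scope classical_set_scope.
Local Open Scope ring_scope.

(** A "graph" is a vertex type with an edge
    relation [E]; [cl] is the predicate "closed subset of the vertex space"
    (topological closedness for topological graphs, always true for finite
    graphs, which carry the discrete topology). *)

Definition gdisconnected {V : Type} (cl : set V -> Prop) (E : V -> V -> Prop)
  (S : set V) : Prop :=
  exists P Q : set V,
    [/\ P !=set0, Q !=set0, P `|` Q = S, P `&` Q = set0 &
        [/\ (exists P', cl P' /\ P = S `&` P'),
            (exists Q', cl Q' /\ Q = S `&` Q') &
            (forall p q, P p -> Q q -> ~ E p q)]].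

Definition gconnected {V : Type} (cl : set V -> Prop) (E : V -> V -> Prop)
  (S : set V) : Prop := ~ gdisconnected cl E S.

Definition gcomponent {V : Type} (cl : set V -> Prop) (E : V -> V -> Prop)
  (S C : set V) : Prop :=
  [/\ C `<=` S, gconnected cl E C &
      forall D, C `<=` D -> D `<=` S -> gconnected cl E D -> D = C].

Definition graph_epi {V W : Type} (EV : V -> V -> Prop) (EW : W -> W -> Prop)
  (f : V -> W) : Prop :=
  [/\ (forall x y, EV x y -> EW (f x) (f y)),
      (forall w, exists v, f v = w) &
      (forall a b, EW a b -> exists x y, [/\ EV x y, f x = a & f y = b])].

Definition gconfluent {V W : Type} (clV : set V -> Prop) (EV : V -> V -> Prop)
  (clW : set W -> Prop) (EW : W -> W -> Prop) (f : V -> W) : Prop :=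
  forall Q : set W, gconnected clW EW Q ->
    forall C : set V, gcomponent clV EV (f @^-1` Q) C -> f @` C = Q.

Definition fin_closed {T : finType} : set T -> Prop := fun _ => True.

Definition fin_connected_graph (T : finType) (e : rel T) : Prop :=
  [/\ (0 < #|T|)%N, reflexive e, symmetric e &
      gconnected (@fin_closed T) (fun x y => e x y) setT].

Definition topological_graph (V : topologicalType) (E : set (V * V)) : Prop :=
  [/\ compact [set: V], @second_countable V, zero_dimensional V,
      closed E & (forall x, E (x, x)) /\ (forall x y, E (x, y) -> E (y, x))].

Definition tedge {V : Type} (E : set (V * V)) : V -> V -> Prop :=
  fun x y => E (x, y).

Definition continuous_to_discrete (V : topologicalType) (T : finType)
  (f : V -> T) : Prop := forall A : set T, open (f @^-1` A).

Definition tconfluent_epi (V : topologicalType) (E : set (V * V))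
  (T : finType) (e : rel T) (f : V -> T) : Prop :=
  [/\ continuous_to_discrete f, graph_epi (tedge E) (fun a b => e a b) f &
      gconfluent closed (tedge E) (@fin_closed T) (fun a b => e a b) f].

Definition fconfluent_epi (B : finType) (eB : rel B) (A : finType) (eA : rel A)
  (g : B -> A) : Prop :=
  graph_epi (fun a b => eB a b) (fun a b => eA a b) g /\
  gconfluent (@fin_closed B) (fun a b => eB a b) (@fin_closed A)
             (fun a b => eA a b) g.

Definition compatible_metric (R : realType) (V : topologicalType)
  (d : V -> V -> R) : Prop :=
  [/\ (forall x y, d x y = 0 <-> x = y),
      (forall x y, d x y = d y x),
      (forall x y z, d x z <= d x y + d y z) &
      (forall A : set V, open A <->
         (forall x, A x -> exists2 r : R, 0 < r & forall y, d x y < r -> A y))].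

Definition diam_lt (R : realType) (V : Type) (d : V -> V -> R)
  (S : set V) (eps : R) : Prop :=
  exists2 r : R, r < eps & forall x y, S x -> S y -> d x y <= r.

(** The three properties characterizing the projective Fraisse limit G. *)
Definition is_projective_Fraisse_limit (R : realType) (V : topologicalType)
  (E : set (V * V)) (d : V -> V -> R) : Prop :=
  [/\ topological_graph E,
      (* (1) *)
      (forall (A : finType) (eA : rel A), fin_connected_graph eA ->
         exists f : V -> A, tconfluent_epi E eA f),
      (* (2) *)
      (forall (A : finType) (eA : rel A) (B : finType) (eB : rel B),
         fin_connected_graph eA -> fin_connected_graph eB ->
         forall (f : V -> A) (g : B -> A),
           tconfluent_epi E eA f -> fconfluent_epi eB eA g ->
           exists h : V -> B, tconfluent_epi E eB h /\ f = g \o h) &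
      (* (3) *)
      (forall eps : R, 0 < eps ->
         exists (A : finType) (eA : rel A) (f : V -> A),
           [/\ fin_connected_graph eA, tconfluent_epi E eA f &
               forall a : A, diam_lt d (f @^-1` [set a]) eps])].

Definition closed_subgraph (V : topologicalType) (E : set (V * V))
  (VA : set V) (EA : set (V * V)) : Prop :=
  [/\ closed VA, closed EA, EA `<=` E,
      (forall x y, EA (x, y) -> VA x /\ VA y) &
      (forall x, VA x -> EA (x, x)) /\ (forall x y, EA (x, y) -> EA (y, x))].

Definition indecomposable (V : topologicalType) (E : set (V * V)) : Prop :=
  gconnected closed (tedge E) setT /\
  ~ (exists (VA : set V) (EA : set (V * V)) (VB : set V) (EB : set (V * V)),
       [/\ closed_subgraph E VA EA, gconnected closed (tedge EA) VA,
           closed_subgraph E VB EB, gconnected closed (tedge EB) VB &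
           [/\ VA `|` VB = setT, VA != setT & VB != setT]]).

From HB Require Import structures.
From mathcomp Require Import all_boot all_order all_algebra.
From mathcomp Require Import all_classical all_reals all_analysis.
Set Implicit Arguments. Unset Strict Implicit. Unset Printing Implicit Defensive.
Import Order.TTheory GRing.Theory Num.Theory.
Local Open Scope classical_set_scope.

(** Connectedness: a separation of the compact space by two clopen sets has
    positive width, so an epimorphism onto a finite connected graph whose
    fibres are thinner than that width would map it onto a separation of
    that graph.

    Indecomposability: if [V = A ∪ B] with [A], [B] proper closed connected
    subgraphs, pick [a ∉ B], [b ∉ A] and a map [f] onto a finite connected
    graph so fine that the fibre of [f a] avoids [B] and the fibre of [f b]
    avoids [A].  The first projection from two copies of the target glued
    along [f b] is confluent, so by (2) [f] factors through it via some [h].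
    Then [h(A)] is connected, contains both copies of [f a] and no copy of
    [f b]; but the two copies communicate only through [f b]. *)

Section FiniteConnectedness.
Variables (T : finType) (e : T -> T -> Prop).
Local Notation fconnected := (gconnected (@fin_closed T) e).

Lemma fin_gdisconnected (S P Q : set T) :
  P !=set0 -> Q !=set0 -> P `|` Q = S -> P `&` Q = set0 ->
  (forall p q, P p -> Q q -> ~ e p q) -> gdisconnected (@fin_closed T) e S.
Proof.
move=> P0 Q0 PQS PQ0 noE; exists P, Q; split=> //; split=> //.
- by exists P; split=> //; rewrite -PQS setUK.
- by exists Q; split=> //; rewrite -PQS setIC setKU.
Qed.

Lemma fin_connected_sub_sep (D P Q : set T) :
  fconnected D -> D `<=` P `|` Q -> P `&` Q = set0 ->
  (forall p q, P p -> Q q -> ~ e p q) -> D `<=` P \/ D `<=` Q.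
Proof.
move=> Dc DPQ PQ0 noE; apply: contrapT => /not_orP[].
rewrite -!setD_eq0 => /eqP/set0P[x [Dx nPx]] /eqP/set0P[y [Dy nQy]].
apply: Dc; apply: (@fin_gdisconnected _ (D `&` P) (D `&` Q)).
- by exists y; split => //; case: (DPQ y Dy).
- by exists x; split => //; case: (DPQ x Dx).
- by rewrite -setIUr; apply/setIidl.
- by rewrite setIACA setIid PQ0 setI0.
- by move=> p q [_ Pp] [_ Qq]; apply: noE.
Qed.

Lemma fin_connected_setU_edge (D C : set T) x y :
  (forall a b, e a b -> e b a) ->
  fconnected D -> fconnected C -> D x -> C y -> e x y -> fconnected (D `|` C).
Proof.
move=> esym Dc Cc Dx Cy exy [P [Q [[p Pp] [q Qq] PQ PQ0 [_ _ noE]]]].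
have [sD sC] : D `<=` P `|` Q /\ C `<=` P `|` Q by rewrite PQ; split=> z; [left|right].
have disj z : P z -> Q z -> False by move=> Pz Qz; have : (P `&` Q) z by []; rewrite PQ0.
have [DP|DQ] := fin_connected_sub_sep Dc sD PQ0 noE;
have [CP|CQ] := fin_connected_sub_sep Cc sC PQ0 noE.
- have : (P `|` Q) q by right.
  by rewrite PQ => -[/DP|/CP] Pq; apply: (disj q).
- exact: noE (DP x Dx) (CQ y Cy) exy.
- exact: noE (CP y Cy) (DQ x Dx) (esym _ _ exy).
- have : (P `|` Q) p by left.
  by rewrite PQ => -[/DQ|/CQ] Qp; apply: (disj p).
Qed.

End FiniteConnectedness.

Lemma gconnected_image (V : Type) (clV : set V -> Prop) (eV : V -> V -> Prop)
    (T : finType) (eT : T -> T -> Prop) (h : V -> T) (S : set V) :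
  (forall P : set T, clV (h @^-1` P)) ->
  (forall x y, S x -> S y -> eV x y -> eT (h x) (h y)) ->
  gconnected clV eV S -> gconnected (@fin_closed T) eT (h @` S).
Proof.
move=> hcl hE Sc [P [Q [[p Pp] [q Qq] PQ PQ0 [_ _ noE]]]].
have [u Su hup] : (h @` S) p by rewrite -PQ; left.
have [v Sv hvq] : (h @` S) q by rewrite -PQ; right.
apply: Sc; exists (S `&` h @^-1` P), (S `&` h @^-1` Q); split.
- by exists u; split; rewrite //= hup.
- by exists v; split; rewrite //= hvq.
- by rewrite -setIUr -preimage_setU PQ; apply/setIidl => z Sz; exists z.
- by rewrite setIACA setIid -preimage_setI PQ0 preimage_set0 setI0.
- split; [by exists (h @^-1` P) | by exists (h @^-1` Q) |].
  by move=> x y [Sx Px] [Sy Qy] exy; apply: noE Px Qy (hE _ _ Sx Sy exy).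
Qed.

(** Two copies of [eA]; an edge may change copies only at a vertex over [q]. *)
Definition glued_double (A : finType) (eA : rel A) (q : A) : rel (A * bool) :=
  fun u v => eA u.1 v.1 && [|| u.2 == v.2, u.1 == q | v.1 == q].

Definition layer (A : Type) (Q : set A) (i : bool) : set (A * bool) :=
  (fun x => (x, i)) @` Q.

Section GluedDouble.
Variables (A : finType) (eA : rel A) (q : A).
Local Notation eG := (fun u v => glued_double eA q u v).

Lemma glued_double_refl : reflexive eA -> reflexive (glued_double eA q).
Proof. by move=> rA u; rewrite /glued_double rA eqxx. Qed.

Lemma glued_double_sym : symmetric eA -> symmetric (glued_double eA q).
Proof.
move=> sA u v; rewrite /glued_double sA eq_sym; congr (_ && _).
by case: (u.1 == q); case: (v.1 == q); rewrite ?orbT ?orbF.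
Qed.

Lemma layer_connected (Q : set A) i :
  gconnected (@fin_closed A) (fun a b => eA a b) Q ->
  gconnected (@fin_closed _) eG (layer Q i).
Proof.
by apply: gconnected_image => // x y _ _ exy; rewrite /glued_double exy eqxx.
Qed.

Lemma glued_double_connected :
  fin_connected_graph eA -> fin_connected_graph (glued_double eA q).
Proof.
move=> [A0 rA sA Aconn]; split.
- by rewrite card_prod muln_gt0 A0 card_bool.
- exact: glued_double_refl.
- exact: glued_double_sym.
have -> : [set: A * bool] = layer setT false `|` layer setT true.
  by apply/seteqP; split=> // -[x []] _; [right|left]; exists x.
apply: (@fin_connected_setU_edge _ _ _ _ (q, false) (q, true)).
- by move=> u v; rewrite glued_double_sym.
- exact: layer_connected.
- exact: layer_connected.
- by exists q.
- by exists q.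
- by rewrite /glued_double /= rA eqxx orbT.
Qed.

Lemma fst_confluent_epi :
  reflexive eA -> symmetric eA -> fconfluent_epi (glued_double eA q) eA fst.
Proof.
move=> rA sA; split.
  split=> [x y /andP[]//|a|a b eab]; first by exists (a, false).
  by exists (a, false), (b, false); rewrite /glued_double eab eqxx.
move=> Q Qc C [sC Cc Cmax].
have layer_sub i : layer Q i `<=` fst @^-1` Q by move=> _ [x Qx <-].
apply/seteqP; split=> [_ [u Cu <-]|y Qy]; first exact: sC.
have [w Cw] : C !=set0.
  apply/set0P/eqP => C0.
  have C_layer : C `<=` layer Q false by rewrite C0.
  have := Cmax _ C_layer (layer_sub false) (layer_connected (i := false) Qc).
  by rewrite C0 => /seteqP[/(_ (y, false)) + _]; apply; exists y.
have Cw_layer : C `|` layer Q w.2 = C.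
  apply: Cmax; first exact: subsetUl.
    by move=> u [/sC|/layer_sub].
  apply: (@fin_connected_setU_edge _ _ _ _ w w) => //.
  - by move=> u v; rewrite /= glued_double_sym.
  - exact: layer_connected.
  - by exists w.1 => //; [apply: sC | case: w {Cw}].
  - exact: glued_double_refl.
by exists (y, w.2) => //; rewrite -Cw_layer; right; exists y.
Qed.

Lemma glued_double_separated (X : set (A * bool)) p :
  X (p, false) -> X (p, true) -> (forall i, ~ X (q, i)) ->
  gdisconnected (@fin_closed _) eG X.
Proof.
move=> Xp0 Xp1 Xq.
apply: (@fin_gdisconnected _ _ _ (X `&` [set u | u.2 = false])
                                 (X `&` [set u | u.2 = true])).
- by exists (p, false).
- by exists (p, true).
- by rewrite -setIUr; apply/setIidl => -[x []] _; [right|left].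
- by apply/seteqP; split=> // u [[_ /= ->] [_ /=]].
move=> [x i] [y j] [Xx /= i0] [Xy /= j1].
rewrite /glued_double /= i0 j1 => /andP[_ /or3P[//|/eqP xq|/eqP yq]].
- by apply: (Xq i); rewrite -xq.
- by apply: (Xq j); rewrite -yq.
Qed.

End GluedDouble.

Lemma closed_preimage_discrete (V : topologicalType) (T : finType) (h : V -> T) :
  continuous_to_discrete h -> forall P : set T, closed (h @^-1` P).
Proof.
by move=> hc P; rewrite -[P]setCK preimage_setC; exact: open_closedC (hc (~` P)).
Qed.

Local Open Scope ring_scope.

Section MetricGraph.
Variables (R : realType) (V : topologicalType) (d : V -> V -> R).
Hypothesis dm : compatible_metric d.

Lemma metric_ball_open x r : open [set y | d x y < r].
Proof.
case: dm => _ _ dtri dopen; apply/dopen => y /= dxy.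
exists (r - d x y); first by rewrite subr_gt0.
by move=> z dyz; apply: le_lt_trans (dtri x y z) _; rewrite -ltrBrDl.
Qed.

Lemma compact_uniform_nbhs (K U : set V) :
  compact K -> open U -> K `<=` U ->
  exists2 eps : R, 0 < eps & forall x y, K x -> d x y < eps -> U y.
Proof.
case: (dm) => dsep _ dtri dopen cK oU KU.
pose thin eps := [set x | forall y, d x y < eps -> U y].
have : \forall eps \near (0 : R)^'+, K `<=` thin eps.
  apply: ((compact_near_coveringP K).1 cK _ _ thin) => x Kx.
  have [r r0 rU] := (dopen U).1 oU x (KU x Kx).
  exists ([set x' | d x x' < r / 2], [set eps | eps < r / 2]).
    split; last by apply: nbhs_right_lt; rewrite divr_gt0.
    apply: open_nbhs_nbhs; split; first exact: metric_ball_open.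
    by rewrite /= (proj2 (dsep x x) erefl) divr_gt0.
  move=> [x' eps] /= [dxx' eps_lt] y dx'y; apply: rU.
  apply: le_lt_trans (dtri x x' y) _; rewrite [r](splitr r).
  by apply: ltrD => //; apply: lt_trans dx'y eps_lt.
move=> Kfine; have [eps [eps0 epsK]] := filter_ex (filterI (nbhs_right_gt 0) Kfine).
by exists eps => // x y Kx; apply: epsK.
Qed.

Lemma small_fibre_sub (T : Type) (f : V -> T) x eps (U : set V) :
  diam_lt d (f @^-1` [set f x]) eps -> (forall y, d x y < eps -> U y) ->
  f @^-1` [set f x] `<=` U.
Proof.
move=> [r r_lt hr] ballU y fy; apply: ballU.
exact: le_lt_trans (hr x y erefl fy) r_lt.
Qed.

Lemma gconnected_of_fine_epis (E : set (V * V)) :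
  compact [set: V] ->
  (forall eps : R, 0 < eps -> exists (A : finType) (eA : rel A) (f : V -> A),
     [/\ fin_connected_graph eA, graph_epi (tedge E) (fun a b => eA a b) f &
         forall a, diam_lt d (f @^-1` [set a]) eps]) ->
  gconnected closed (tedge E) setT.
Proof.
move=> cV fine [P [Q [[p Pp] [q Qq] PQ PQ0 [[P' [cP' eP]] [Q' [cQ' eQ]] noE]]]].
rewrite setTI in eP; rewrite setTI in eQ; subst P' Q'.
have cover v : P v \/ Q v by have : (P `|` Q) v by rewrite PQ.
have PnQ : P `<=` ~` Q by move=> x Px Qx; have : (P `&` Q) x by []; rewrite PQ0.
have [eps eps0 epsP] := compact_uniform_nbhs (subclosed_compact cP' cV (subsetT _))
  (closed_openC cQ') PnQ.
have [A [eA [f [[_ _ _ Aconn] [_ fsurj flift] fib]]]] := fine eps eps0.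
have fibreP x : P x -> f @^-1` [set f x] `<=` ~` Q.
  by move=> Px; apply: small_fibre_sub (fib _) _ => y; apply: epsP.
have inP v : (f @` P) (f v) -> P v.
  by move=> [x Px fxv]; case: (cover v) => // Qv; case: (fibreP x Px v).
have inQ v : (f @` Q) (f v) -> Q v.
  by move=> [y Qy fyv]; case: (cover v) => // Pv; case: (fibreP v Pv y).
apply: Aconn; apply: (@fin_gdisconnected _ _ _ (f @` P) (f @` Q)).
- by exists (f p), p.
- by exists (f q), q.
- apply/seteqP; split=> // a _; have [v <-] := fsurj a.
  by case: (cover v) => ?; [left|right]; exists v.
- by apply/seteqP; split=> // _ [[x Px <-] /inQ/(PnQ x Px)].
move=> a b fPa fQb /flift[x [y [exy fxa fyb]]].
by subst a b; apply: noE (inP x fPa) (inQ y fQb) exy.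
Qed.

End MetricGraph.

Lemma no_proper_connected_cover (R : realType) (V : topologicalType)
    (E : set (V * V)) (d : V -> V -> R) :
  compatible_metric d -> is_projective_Fraisse_limit E d ->
  ~ (exists (VA : set V) (EA : set (V * V)) (VB : set V) (EB : set (V * V)),
       [/\ closed_subgraph E VA EA, gconnected closed (tedge EA) VA,
           closed_subgraph E VB EB, gconnected closed (tedge EB) VB &
           [/\ VA `|` VB = setT, VA != setT & VB != setT]]).
Proof.
move=> dm [_ _ factor fine] [VA [EA [VB [EB [[cVA _ sEA _ _] VAc [cVB _ _ _ _] _
  [VAB /setTPn[b nVAb] /setTPn[a nVBa]]]]]]].
have [_ _ _ dopen] := dm.
have [ra ra0 ballA] := (dopen _).1 (closed_openC cVB) a nVBa.
have [rb rb0 ballB] := (dopen _).1 (closed_openC cVA) b nVAb.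
have eps0 : 0 < Num.min ra rb by rewrite lt_min ra0 rb0.
have [A [eA [f [Aconn fepi fib]]]] := fine _ eps0.
have fibre_a : f @^-1` [set f a] `<=` VA.
  move=> z fz; have : (VA `|` VB) z by rewrite VAB.
  case=> // VBz; exfalso; apply: (small_fibre_sub (U := ~` VB) (fib _) _ fz VBz) => y.
  by rewrite lt_min => /andP[/ballA].
have fibre_b : f @^-1` [set f b] `<=` ~` VA.
  by apply: small_fibre_sub (fib _) _ => y; rewrite lt_min => /andP[_ /ballB].
have [_ rA sA _] := Aconn.
have [h [[hc [hE hsurj _] _] fgh]] := factor _ eA _ _ Aconn
  (glued_double_connected (f b) Aconn) f fst fepi (fst_confluent_epi (f b) rA sA).
have fh z : (h z).1 = f z by rewrite fgh.
have hVA i : (h @` VA) (f a, i).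
  have [z hz] := hsurj (f a, i).
  by exists z => //; apply: fibre_a; rewrite /= -fh hz.
have hVAb i : ~ (h @` VA) (f b, i).
  by move=> [z VAz hz]; apply: (fibre_b z) => //; rewrite /= -fh hz.
apply: (gconnected_image (closed_preimage_discrete hc) _ VAc
  (glued_double_separated eA (hVA false) (hVA true) hVAb)).
by move=> x y _ _ exy; apply: hE; apply: sEA exy.
Qed.

Theorem mainTheorem6 (R : realType) (V : topologicalType) (E : set (V * V))
  (d : V -> V -> R) :
  compatible_metric d ->
  is_projective_Fraisse_limit E d ->
  topological_graph E /\ indecomposable E.
Proof.
move=> dm FL; have [tgE _ _ fine] := FL; have [cV _ _ _ _] := tgE.
split=> //; split; last exact: no_proper_connected_cover dm FL.
apply: (gconnected_of_fine_epis dm cV) => eps /fine[A [eA [f [Aconn [_ fepi _] fib]]]].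
by exists A, eA, f.
Qed.
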